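(* Let $d\ge 1$, let $\Omega=\operatorname{diag}(\omega_j)_{j=1}^d\in\mathbb{R}^{d\times d}$ with all $\omega_j\ge 0$, and let $A\in\mathbb{C}^{d\times d}$ be self-adjoint. Let $0<h\le 1$ and let $\psi_1,\phi\colon\mathbb{R}\to\mathbb{R}$ be even functions satisfying \[ \psi_1(\xi)=\operatorname{sinc}(\xi)\,\phi(\xi)\qquad\text{for all }\xi\in\mathbb{R}. \] Set $\Psi_1=\psi_1(h\Omega)$, $\Phi=\phi(h\Omega)$. For given $q_0,\dot q_0\in\mathbb{C}^d$, define $(q_n,\dot q_n)_{n\ge 0}$ recursively by \begin{align*} q_{n+1} &= \cos(h\Omega) q_n + h\operatorname{sinc}(h\Omega) \dot{q}_n - \tfrac12 h^2 \operatorname{sinc}(h\Omega) \Psi_1 A\Phi q_n,\\ \dot{q}_{n+1} &= -\Omega \sin(h\Omega) q_n + \cos(h\Omega) \dot{q}_n - \tfrac12 h \big( \cos(h\Omega) \Psi_1 A\Phi q_n + \Psi_1 A\Phi q_{n+1}\big). \end{align*} Define \[ \mathcal{H}(q,\dot{q}) = \tfrac12 \|\Omega q\|^2 + \tfrac12 \|\dot{q}\|^2 + \tfrac12 \operatorname{Re}\big((\cos(h\Omega) \Phi q)^* A \Phi q\big) - \tfrac18 h^2 \|\Psi_1 A \Phi q\|^2 . \] Then $\mathcal{H}(q_{n+1},\dot q_{n+1})=\mathcal{H}(q_n,\dot q_n)$ for all $n\ge 0$.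
   Context: $\|\cdot\|$ is the Euclidean norm on $\mathbb{C}^d$ and ${}^*$ denotes conjugate transpose. $\operatorname{sinc}(\xi)=\sin(\xi)/\xi$ for $\xi\ne0$ and $\operatorname{sinc}(0)=1$. For a function $f\colon\mathbb{R}\to\mathbb{R}$, $f(h\Omega)$ denotes the diagonal matrix $\operatorname{diag}(f(h\omega_j))_{j=1}^d$; in particular $\cos(h\Omega),\sin(h\Omega),\operatorname{sinc}(h\Omega)$ are diagonal matrices. The recursion is a trigonometric integrator for $\ddot q=-\Omega^2q-Aq$. *)

From mathcomp Require Import all_boot all_algebra complex.
From mathcomp Require Import all_classical all_reals all_analysis.
Set Implicit Arguments. Unset Strict Implicit. Unset Printing Implicit Defensive.
Import GRing.Theory Num.Theory.
Local Open Scope ring_scope.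

Definition sinc (R : realType) (x : R) : R := if x == 0 then 1 else sin x / x.

Definition fdiag (R : realType) (d : nat) (f : R -> R) (h : R) (om : 'I_d -> R)
  : 'M[R[i]]_d := diag_mx (\row_j (f (h * om j))%:C%C).

Definition Omat (R : realType) (d : nat) (om : 'I_d -> R) : 'M[R[i]]_d :=
  diag_mx (\row_j (om j)%:C%C).

Definition adj (R : realType) (m n : nat) (M : 'M[R[i]]_(m, n)) : 'M[R[i]]_(n, m) :=
  map_mx conjc M^T.

Definition vnorm (R : realType) (d : nat) (v : 'cV[R[i]]_d) : R :=
  Num.sqrt (\sum_i (complex.Re (v i 0) ^+ 2 + complex.Im (v i 0) ^+ 2)).

Definition Henergy (R : realType) (d : nat) (om : 'I_d -> R) (A : 'M[R[i]]_d)
  (h : R) (psi1 phi : R -> R) (q qd : 'cV[R[i]]_d) : R :=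
  let Om := Omat om in
  let C := fdiag cos h om in
  let Psi1 := fdiag psi1 h om in
  let Phi := fdiag phi h om in
  2^-1 * vnorm (Om *m q) ^+ 2 + 2^-1 * vnorm qd ^+ 2
  + 2^-1 * complex.Re ((adj (C *m Phi *m q) *m A *m (Phi *m q)) 0 0)
  - 8^-1 * h ^+ 2 * vnorm (Psi1 *m A *m Phi *m q) ^+ 2.

(* Write g(q) = Psi1 A Phi q = sinc(h Omega) B q with B = Phi A Phi self-adjoint,
   and split one step into a half kick p+ = qd_n - (h/2) g(q_n), a drift
     Omega q_{n+1} = cos(h Omega) Omega q_n + sin(h Omega) p+,
     p-            = - sin(h Omega) Omega q_n + cos(h Omega) p+,
   and a second half kick qd_{n+1} = p- - (h/2) g(q_{n+1}).  The drift is a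
   rotation, so it preserves |Omega q|^2 + |p|^2.  Since
   h sinc(h Omega) p+ = q_{n+1} - cos(h Omega) q_n and
   h sinc(h Omega) p- = cos(h Omega) q_{n+1} - q_n, the cross terms of the two
   kicks cancel against the last two terms of H, leaving
     2 H(q_n, qd_n)         = |Omega q_n|^2 + |p+|^2 + Re <q_{n+1}, B q_n>,
     2 H(q_{n+1}, qd_{n+1}) = |Omega q_{n+1}|^2 + |p-|^2 + Re <q_n, B q_{n+1}>,
   and the right-hand sides agree because B is self-adjoint. *)

From mathcomp Require Import all_boot all_algebra complex.
From mathcomp Require Import all_classical all_reals all_analysis.
From mathcomp Require Import ring.
Import GRing.Theory Num.Theory.
Set Implicit Arguments. Unset Strict Implicit.
Local Open Scope ring_scope.

Section ComplexMatrix.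
Variable R : realType.
Local Notation C := R[i].

Lemma ReD (x y : C) : complex.Re (x + y) = complex.Re x + complex.Re y.
Proof. exact: (raddfD (@complex.Re R : Rcomplex R -> R)). Qed.

Lemma ReN (x : C) : complex.Re (- x) = - complex.Re x.
Proof. exact: (raddfN (@complex.Re R : Rcomplex R -> R)). Qed.

Lemma Re_sum n (F : 'I_n -> C) : complex.Re (\sum_i F i) = \sum_i complex.Re (F i).
Proof. exact: (raddf_sum (@complex.Re R : Rcomplex R -> R)). Qed.

Lemma ReZ (r : R) (x : C) : complex.Re (r%:C%C * x) = r * complex.Re x.
Proof. by case: x => a b /=; rewrite mul0r subr0. Qed.

Lemma Re_conj (x : C) : complex.Re x^*%C = complex.Re x.
Proof. by case: x. Qed.

Lemma adjE m n (M : 'M[C]_(m, n)) i j : adj M i j = (M j i)^*%C.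
Proof. by rewrite !mxE. Qed.

Lemma adjK m n (M : 'M[C]_(m, n)) : adj (adj M) = M.
Proof. by apply/matrixP => i j; rewrite !adjE conjcK. Qed.

Lemma adj_mulmx m n p (M : 'M[C]_(m, n)) (N : 'M[C]_(n, p)) :
  adj (M *m N) = adj N *m adj M.
Proof. by rewrite /adj trmx_mul map_mxM. Qed.

End ComplexMatrix.

Definition rdot (R : realType) (d : nat) (u v : 'cV[R[i]]_d) : R :=
  complex.Re ((adj u *m v) 0 0).

Local Notation "''[' u , v ]" := (rdot u v) : ring_scope.
Local Notation "''[' u ]" := (rdot u u) : ring_scope.

Section RealDot.
Variables (R : realType) (d : nat).
Implicit Types (u v w : 'cV[R[i]]_d) (M : 'M[R[i]]_d).

Lemma rdotC u v : '[u, v] = '[v, u].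
Proof. by rewrite /rdot -Re_conj -adjE adj_mulmx adjK. Qed.

Lemma rdotDr u v w : '[u, v + w] = '[u, v] + '[u, w].
Proof. by rewrite /rdot mulmxDr mxE ReD. Qed.

Lemma rdotNr u v : '[u, - v] = - '[u, v].
Proof. by rewrite /rdot mulmxN mxE ReN. Qed.

Lemma rdotZr (r : R) u v : '[u, r%:C%C *: v] = r * '[u, v].
Proof. by rewrite /rdot -scalemxAr mxE ReZ. Qed.

Lemma rdotDl u v w : '[v + w, u] = '[v, u] + '[w, u].
Proof. by rewrite !(rdotC _ u) rdotDr. Qed.

Lemma rdotNl u v : '[- v, u] = - '[v, u].
Proof. by rewrite !(rdotC _ u) rdotNr. Qed.

Lemma rdotZl (r : R) u v : '[r%:C%C *: v, u] = r * '[v, u].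
Proof. by rewrite !(rdotC _ u) rdotZr. Qed.

Lemma rdot_sqrD u v : '[u + v] = '[u] + 2 * '[u, v] + '[v].
Proof. by rewrite rdotDl !rdotDr (rdotC v u); ring. Qed.

Lemma rdot_mulmxl M u v : '[M *m u, v] = '[u, adj M *m v].
Proof. by rewrite /rdot adj_mulmx mulmxA. Qed.

Lemma rdot_selfadjl M u v : adj M = M -> '[M *m u, v] = '[u, M *m v].
Proof. by move=> hM; rewrite rdot_mulmxl hM. Qed.

Lemma vnorm_sqr v : vnorm v ^+ 2 = '[v].
Proof.
rewrite /vnorm sqr_sqrtr; last by apply: sumr_ge0 => i _; rewrite addr_ge0 ?sqr_ge0.
rewrite /rdot mxE Re_sum; apply: eq_bigr => i _; rewrite adjE.
by case: (v i 0) => a b /=; ring.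
Qed.

Lemma rdot_rotation (C S : 'M[R[i]]_d) u v :
  adj C = C -> adj S = S -> C *m S = S *m C -> C *m C + S *m S = 1%:M ->
  '[C *m u + S *m v] + '[- (S *m u) + C *m v] = '[u] + '[v].
Proof.
move=> adjC adjS commCS CCSS.
have sumsq w : '[C *m w] + '[S *m w] = '[w].
  by rewrite !rdot_selfadjl // !mulmxA -rdotDr -mulmxDl CCSS mul1mx.
have cross : '[S *m u, C *m v] = '[C *m u, S *m v].
  by rewrite !rdot_selfadjl // !mulmxA commCS.
rewrite !rdot_sqrD !rdotNl !rdotNr opprK cross -(sumsq u) -(sumsq v).
(* Abstracting the inner products keeps [ring] from unfolding them. *)
move: '[C *m u] '[S *m u] '[C *m v] '[S *m v] '[C *m u, S *m v] => cu su cv sv cuv.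
ring.
Qed.

End RealDot.

Definition rdiag (R : realType) (d : nat) (a : 'I_d -> R) : 'M[R[i]]_d :=
  diag_mx (\row_j (a j)%:C%C).

Section RealDiagonal.
Variables (R : realType) (d : nat).
Implicit Types a b : 'I_d -> R.

Lemma eq_rdiag a b : a =1 b -> rdiag a = rdiag b.
Proof. by move=> eq_ab; congr diag_mx; apply/rowP => j; rewrite !mxE eq_ab. Qed.

Lemma adj_rdiag a : adj (rdiag a) = rdiag a.
Proof.
apply/matrixP => i j; rewrite adjE !mxE eq_sym.
by case: eqP => [->|_]; rewrite ?mulr1n ?mulr0n ?conjc0 ?conjc_real.
Qed.

Lemma rdiagM a b : rdiag a *m rdiag b = rdiag (fun j => a j * b j).
Proof. by rewrite mulmx_diag; congr diag_mx; apply/rowP => j; rewrite !mxE rmorphM. Qed.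

Lemma rdiagC a b : rdiag a *m rdiag b = rdiag b *m rdiag a.
Proof. by rewrite !rdiagM; apply: eq_rdiag => j; rewrite mulrC. Qed.

Lemma rdiagD a b : rdiag a + rdiag b = rdiag (fun j => a j + b j).
Proof. by apply/matrixP => i j; rewrite !mxE -mulrnDl rmorphD. Qed.

Lemma rdiagZ (r : R) a : r%:C%C *: rdiag a = rdiag (fun j => r * a j).
Proof. by apply/matrixP => i j; rewrite !mxE mulrnAr rmorphM. Qed.

Lemma rdiag1 : rdiag (fun _ : 'I_d => 1 : R) = 1%:M.
Proof. by apply/matrixP => i j; rewrite !mxE. Qed.

End RealDiagonal.

Lemma mul_sinc (R : realType) (x : R) : x * sinc x = sin x.
Proof.
rewrite /sinc; case: eqP => [->|/eqP x_neq0]; first by rewrite mul0r sin0.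
by rewrite mulrC divfK.
Qed.

Section ModifiedEnergy.
Variables (R : realType) (d : nat) (om : 'I_d -> R) (A : 'M[R[i]]_d).
Variables (h : R) (psi1 phi : R -> R).
Hypothesis selfadj_A : adj A = A.
Hypothesis psi1_sinc : forall x, psi1 x = sinc x * phi x.

Local Notation Om := (Omat om).
Local Notation Cm := (fdiag cos h om).
Local Notation Sm := (fdiag sin h om).
Local Notation Gm := (fdiag (@sinc R) h om).
Local Notation Phi := (fdiag phi h om).
Local Notation B := (Phi *m A *m Phi).
Local Notation force v := (fdiag psi1 h om *m A *m Phi *m v).
Local Notation H := (Henergy om A h psi1 phi).
Implicit Types u v w : 'cV[R[i]]_d.

Lemma adj_fdiag f : adj (fdiag f h om) = fdiag f h om.
Proof. exact: adj_rdiag. Qed.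

Lemma fdiagC f g : fdiag f h om *m fdiag g h om = fdiag g h om *m fdiag f h om.
Proof. exact: rdiagC. Qed.

Lemma Omat_fdiagC f : Om *m fdiag f h om = fdiag f h om *m Om.
Proof. exact: rdiagC. Qed.

Lemma adj_PhiAPhi : adj B = B.
Proof. by rewrite !adj_mulmx selfadj_A adj_fdiag !mulmxA. Qed.

Lemma forceE v : force v = Gm *m (B *m v).
Proof.
have -> : fdiag psi1 h om = Gm *m Phi.
  by rewrite rdiagM; apply: eq_rdiag => j; rewrite psi1_sinc.
by rewrite !mulmxA.
Qed.

Lemma cos2Dsin2_fdiag : Cm *m Cm + Sm *m Sm = 1%:M.
Proof. by rewrite !rdiagM rdiagD -rdiag1; apply: eq_rdiag => j; rewrite -!expr2 cos2Dsin2. Qed.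

Lemma scale_sinc_Omat : h%:C%C *: (Gm *m Om) = Sm.
Proof. by rewrite rdiagM rdiagZ; apply: eq_rdiag => j; rewrite mulrCA mulrC mul_sinc. Qed.

Lemma HenergyE v w : H v w =
  2^-1 * '[Om *m v] + 2^-1 * '[w] + 2^-1 * '[v, Cm *m (B *m v)]
  - 8^-1 * h ^+ 2 * '[force v].
Proof.
rewrite /Henergy -mulmxA -[complex.Re _]/'[Cm *m Phi *m v, A *m (Phi *m v)] !vnorm_sqr.
by rewrite (rdot_mulmxl (Cm *m Phi)) adj_mulmx !adj_fdiag fdiagC -!mulmxA.
Qed.

Lemma rdot_force u v w : h%:C%C *: (Gm *m u) = w -> h * '[u, force v] = '[w, B *m v].
Proof. by move=> <-; rewrite forceE rdotZl rdot_selfadjl // adj_fdiag. Qed.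

Lemma Henergy_kick v u k : '[k] = (2^-1 * h) ^+ 2 * '[force v] ->
  2 * H v (u + k) = '[Om *m v] + '[u] + 2 * '[u, k] + '[v, Cm *m (B *m v)].
Proof.
move=> kick_sqr; rewrite HenergyE rdot_sqrD kick_sqr.
move: '[Om *m v] '[u] '[u, k] '[force v] '[v, Cm *m (B *m v)] => X U K N T.
by field.
Qed.

Lemma drift_rotation x u y : y = Cm *m x + h%:C%C *: (Gm *m u) ->
  '[Om *m y] + '[- (Om *m Sm *m x) + Cm *m u] = '[Om *m x] + '[u].
Proof.
move=> ->.
rewrite mulmxDr -scalemxAr !mulmxA !Omat_fdiagC scalemxAl scale_sinc_Omat -!mulmxA.
exact: rdot_rotation (adj_fdiag cos) (adj_fdiag sin) (fdiagC cos sin) cos2Dsin2_fdiag.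
Qed.

Lemma drift_sinc x u y : y = Cm *m x + h%:C%C *: (Gm *m u) ->
  h%:C%C *: (Gm *m (- (Om *m Sm *m x) + Cm *m u)) = Cm *m y - x.
Proof.
move=> y_def; rewrite mulmxDr mulmxN scalerDr scalerN.
have -> : h%:C%C *: (Gm *m (Om *m Sm *m x)) = Sm *m Sm *m x.
  by rewrite !mulmxA 2!scalemxAl scale_sinc_Omat.
have -> : h%:C%C *: (Gm *m (Cm *m u)) = Cm *m (y - Cm *m x).
  by rewrite y_def addrC addKr -scalemxAr !mulmxA fdiagC.
by rewrite mulmxBr !mulmxA addrC -addrA -opprD -mulmxDl cos2Dsin2_fdiag mul1mx.
Qed.

Lemma Henergy_step x p y p1 :
  y = Cm *m x + h%:C%C *: (Gm *m p)
      - (2^-1 * h ^+ 2)%:C%C *: (Gm *m fdiag psi1 h om *m A *m Phi *m x) ->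
  p1 = - (Om *m Sm *m x) + Cm *m p
       - (2^-1 * h)%:C%C *: (Cm *m fdiag psi1 h om *m A *m Phi *m x + force y) ->
  H y p1 = H x p.
Proof.
have mulmx_force M v : M *m fdiag psi1 h om *m A *m Phi *m v = M *m force v.
  by rewrite !mulmxA.
rewrite (mulmx_force _ Gm x) (mulmx_force _ Cm x) => y_def p1_def.
(* pp and pm are the momenta p+ and p- of the kick-drift-kick splitting. *)
pose c := (2^-1 * h)%:C%C.
pose pp := p - c *: force x.
pose pm := - (Om *m Sm *m x) + Cm *m pp.
have y_drift : y = Cm *m x + h%:C%C *: (Gm *m pp).
  rewrite y_def /pp /c mulmxBr scalerBr -scalemxAr scalerA -rmorphM addrA.
  by congr (_ - (_ : R)%:C%C *: _); ring.
have p1_kick : p1 = pm - c *: force y.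
  by rewrite p1_def /pm /pp mulmxBr -scalemxAr scalerDr opprD !addrA; congr (_ - _ - _).
have sinc_pp : h%:C%C *: (Gm *m pp) = y - Cm *m x by rewrite y_drift addrC addKr.
have twice_half K : 2 * (2^-1 * h * K) = h * K.
  by rewrite !mulrA mulfV ?mul1r ?pnatr_eq0.
have cross_x : h * '[pp, force x] = '[y, B *m x] - '[x, Cm *m (B *m x)].
  by rewrite (rdot_force x sinc_pp) rdotDl rdotNl rdot_selfadjl ?adj_fdiag.
have cross_y : h * '[pm, force y] = '[y, Cm *m (B *m y)] - '[x, B *m y].
  by rewrite (rdot_force y (drift_sinc y_drift)) rdotDl rdotNl rdot_selfadjl ?adj_fdiag.
have energy_x : 2 * H x p = '[Om *m x] + '[pp] + '[y, B *m x].
  rewrite -[p](subrK (c *: force x)) -/pp Henergy_kick; last by rewrite rdotZl rdotZr mulrA -expr2.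
  by rewrite rdotZr twice_half cross_x -addrA subrK.
have energy_y : 2 * H y p1 = '[Om *m y] + '[pm] + '[x, B *m y].
  rewrite p1_kick Henergy_kick; last by rewrite rdotNl rdotNr opprK rdotZl rdotZr mulrA -expr2.
  by rewrite rdotNr rdotZr mulrN twice_half cross_y opprB -addrA subrK.
apply: (mulfI (_ : 2 != 0)); first by rewrite pnatr_eq0.
rewrite energy_y energy_x (drift_rotation y_drift); congr (_ + _).
by rewrite rdotC rdot_selfadjl ?adj_PhiAPhi.
Qed.

End ModifiedEnergy.

Theorem theorem1 (R : realType) (d : nat) (hd : (0 < d)%N)
  (om : 'I_d -> R) (hom : forall j, 0 <= om j)
  (A : 'M[R[i]]_d) (hA : adj A = A)
  (h : R) (hh0 : 0 < h) (hh1 : h <= 1)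
  (psi1 phi : R -> R)
  (hpsi_even : forall x, psi1 (- x) = psi1 x)
  (hphi_even : forall x, phi (- x) = phi x)
  (hpsi : forall x, psi1 x = sinc x * phi x)
  (q qd : nat -> 'cV[R[i]]_d)
  (hq : forall n, q n.+1 =
      fdiag cos h om *m q n + h%:C%C *: (fdiag (@sinc R) h om *m qd n)
      - (2^-1 * h ^+ 2)%:C%C *:
          (fdiag (@sinc R) h om *m fdiag psi1 h om *m A *m fdiag phi h om *m q n))
  (hqd : forall n, qd n.+1 =
      - (Omat om *m fdiag sin h om *m q n) + fdiag cos h om *m qd n
      - (2^-1 * h)%:C%C *:
          (fdiag cos h om *m fdiag psi1 h om *m A *m fdiag phi h om *m q n
           + fdiag psi1 h om *m A *m fdiag phi h om *m q n.+1)) :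
  forall n, Henergy om A h psi1 phi (q n.+1) (qd n.+1)
            = Henergy om A h psi1 phi (q n) (qd n).
Proof. by move=> n; apply: Henergy_step (hq n) (hqd n). Qed.
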